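(* Let $G$ be a connected graph with $|V(G)| \ge 3$. If $\det(G) \neq 1$, then $\det'(G) \le \det(G)$.
   Context: A vertex subset $S$ of $G$ is a vertex determining set if the only automorphism of $G$ fixing every vertex of $S$ is the identity; the determining number $\det(G)$ is the minimum size of a vertex determining set. For a graph $G$ with at most one isolated vertex and no component isomorphic to $K_2$, an edge subset $T$ is an edge determining set if the only automorphism $\phi$ of $G$ satisfying $\{\phi(u),\phi(v)\}=\{u,v\}$ for all $\{u,v\}\in T$ is the identity; the determining index $\det'(G)$ is the minimum size of an edge determining set. *)

From mathcomp Require Import all_boot.
From mathcomp Require Import fingroup perm.
Set Implicit Arguments. Unset Strict Implicit. Unset Printing Implicit Defensive.

(* A finite simple graph: vertex type V, adjacency relation adj, assumed
   symmetric and irreflexive in the theorem statement. *)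
Section Defs.
Variables (V : finType) (adj : rel V).

Definition is_aut (s : {perm V}) : bool :=
  [forall u, forall v, adj (s u) (s v) == adj u v].

Definition vdet_set (S : {set V}) : bool :=
  [forall s : {perm V}, (is_aut s && [forall x in S, s x == x]) ==> (s == 1%g)].

(* Determining number: minimum size of a vertex determining set
   (setT is always one, so the default value #|V| is never used). *)
Definition det_number : nat :=
  \big[minn/#|V|]_(S : {set V} | vdet_set S) #|S|.

Definition is_edge (e : {set V}) : bool :=
  [exists u, exists v, adj u v && (e == [set u; v])].

Definition edge_set : {set {set V}} := [set e | is_edge e].

Definition edet_set (T : {set {set V}}) : bool :=
  (T \subset edge_set) &&
  [forall s : {perm V},
     (is_aut s && [forall u, forall v, ([set u; v] \in T) ==>
                                     ([set s u; s v] == [set u; v])])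
     ==> (s == 1%g)].

(* Determining index: minimum size of an edge determining set
   (edge_set itself is one under the paper's standing hypotheses). *)
Definition det_index : nat :=
  \big[minn/#|edge_set|]_(T : {set {set V}} | edet_set T) #|T|.
End Defs.

From mathcomp Require Import all_boot order fingroup perm action.
Import Order.TTheory.

Set Implicit Arguments.
Unset Strict Implicit.
Unset Printing Implicit Defensive.

(* Fix a minimum determining set S with |S| >= 2 and v1 in S.  Let G1 be the
   group of automorphisms fixing S \ {v1} pointwise: since it fixes some
   v2 != v1, the G1-orbit of v1 is not all of V, so by connectivity v1 has a
   neighbour u1 outside it.  Let G2 be the stabiliser of the edge {v1, u1}:
   it preserves a proper subset of V (here |V| >= 3 is used), so no G2-orbit
   is all of V and every v in S \ {v1} has a neighbour f v outside its
   G2-orbit.  Then T = {v1 u1} + {v (f v) | v in S \ {v1}} determines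
   edges: an automorphism fixing each edge of T lies in G2, hence fixes every
   v in S \ {v1}, hence lies in G1, hence fixes v1, so it fixes S. *)

Section GraphAutomorphisms.
Variables (V : finType) (adj : rel V).

Definition graph_aut : {set {perm V}} := [set s | is_aut adj s].

Lemma graph_autP (s : {perm V}) :
  reflect (forall u v, adj (s u) (s v) = adj u v) (s \in graph_aut).
Proof.
rewrite inE; apply: (iffP forallP) => [H u v | H u].
  by have /forallP/(_ v)/eqP := H u.
by apply/forallP => v; rewrite H.
Qed.

Lemma group_set_graph_aut : group_set graph_aut.
Proof.
apply/group_setP; split=> [|s t /graph_autP Hs /graph_autP Ht].
  by apply/graph_autP => u v; rewrite !perm1.
by apply/graph_autP => u v; rewrite !permM Ht Hs.
Qed.

Canonical graph_aut_group := group group_set_graph_aut.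

Section ConnectedGraph.
Hypotheses (adj_sym : symmetric adj) (connected : forall u v : V, connect adj u v).

Lemma orbit_closed (G : {group {perm V}}) v :
  G \subset graph_aut -> {subset adj v <= orbit 'P G v} ->
  closed adj (orbit 'P G v).
Proof.
move=> /subsetP autG nbr_orbit.
suff adj_orbit x y : adj x y -> x \in orbit 'P G v -> y \in orbit 'P G v.
  by move=> x y xy; apply/idP/idP; apply: adj_orbit; rewrite // adj_sym.
move=> /[swap] /orbitP[s Gs <-] /= svy.
have /graph_autP s_aut := autG s Gs.
rewrite -(orbit_actr _ _ _ (groupVr Gs)) nbr_orbit //=.
by rewrite unfold_in /aperm -s_aut permKV.
Qed.

Lemma exists_nbr_notin_orbit (G : {group {perm V}}) v :
  G \subset graph_aut -> orbit 'P G v != setT ->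
  exists2 u, adj v u & u \notin orbit 'P G v.
Proof.
move=> autG orbit_neqT.
have [u /andP[vu u_out] | no_nbr] :=
  pickP [pred u | adj v u & u \notin orbit 'P G v]; first by exists u.
have nbr_orbit : {subset adj v <= orbit 'P G v}.
  by move=> u vu; apply: contraFT (no_nbr u) => u_out; apply/andP.
case/eqP: orbit_neqT; apply/setP => x.
rewrite inE -(closed_connect (orbit_closed autG nbr_orbit) (connected v x)).
exact: orbit_refl.
Qed.

End ConnectedGraph.
End GraphAutomorphisms.

Lemma orbit_neqT_of_astabs (V : finType) (G : {group {perm V}}) (A : {set V}) x v :
  G \subset 'N(A | 'P)%g -> x \in A -> A != setT -> orbit 'P G v != setT.
Proof.
move=> GA Ax; apply: contraNN => /eqP orbitT; apply/eqP.
have /orbit_eqP orbit_x : x \in orbit 'P G v by rewrite orbitT inE.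
by apply/eqP; rewrite eqEsubset subsetT -orbitT -orbit_x acts_sub_orbit.
Qed.

Lemma perm_fixed_of_pair (V : finType) (G : {group {perm V}}) s v u :
  s \in G -> s \in 'N([set v; u] | 'P)%g -> u \notin orbit 'P G v -> s v = v.
Proof.
move=> Gs /astabsP/(_ v); rewrite /= /aperm set21 !inE.
case/orP=> [/eqP // | /eqP svu].
by rewrite -svu (mem_orbit 'P v Gs).
Qed.

Lemma astabs_pair (V : finType) (s : {perm V}) u v :
  [set s u; s v] = [set u; v] -> s \in 'N([set u; v] | 'P)%g.
Proof.
by move=> E; apply/astabsP => x; rewrite /= /aperm -{1}E !inE !(inj_eq perm_inj).
Qed.

Section DeterminingSets.
Variables (V : finType) (adj : rel V).

Lemma vdet_set_aut_eq1 (S : {set V}) (s : {perm V}) :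
  vdet_set adj S -> s \in graph_aut adj -> {in S, forall x, s x = x} -> s = 1%g.
Proof.
move=> /forallP/(_ s)/implyP detS; rewrite inE => aut_s fixS.
by apply/eqP/detS; rewrite aut_s; apply/forall_inP => x /fixS ->.
Qed.

Lemma edet_set_of_vdet_set (S : {set V}) (T : {set {set V}}) :
  vdet_set adj S -> T \subset edge_set adj ->
  (forall s, s \in graph_aut adj ->
     (forall u v, [set u; v] \in T -> s \in 'N([set u; v] | 'P)%g) ->
     {in S, forall x, s x = x}) ->
  edet_set adj T.
Proof.
move=> detS Tedges fixS; rewrite /edet_set Tedges; apply/forallP => s.
apply/implyP => /andP[aut_s /forallP pairs]; apply/eqP.
have aut_s' : s \in graph_aut adj by rewrite inE.
apply: (vdet_set_aut_eq1 detS aut_s') (fixS s aut_s' _) => u v Tuv.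
by apply: astabs_pair; apply/eqP; have /forallP/(_ v)/implyP := pairs u; apply.
Qed.

Lemma det_index_le (T : {set {set V}}) : edet_set adj T -> det_index adj <= #|T|.
Proof.
move=> edetT; rewrite /det_index -minEnat.
exact: (bigmin_le_cond (T := nat) _ _ edetT).
Qed.

Lemma det_number_attained : exists2 S, vdet_set adj S & #|S| = det_number adj.
Proof.
have detT : vdet_set adj setT.
  apply/forallP => s; apply/implyP => /andP[_ /forallP fixT].
  by apply/eqP/permP => x; rewrite perm1; apply/eqP; have := fixT x; rewrite in_setT.
rewrite /det_number -minEnat.
have [S detS ->] := eq_bigmin (T := nat) (x := #|V|) _ _ _ detT (fun S _ => max_card S).
by exists S.
Qed.

Lemma edge_set_pair u v : adj u v -> [set u; v] \in edge_set adj.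
Proof.
by move=> uv; rewrite inE; apply/existsP; exists u; apply/existsP; exists v; rewrite uv /=.
Qed.

Hypotheses (adj_sym : symmetric adj) (connected : forall u v : V, connect adj u v).
Hypothesis card_V : 3 <= #|V|.

Lemma exists_edet_set_le_vdet_set (S : {set V}) v1 v2 :
  vdet_set adj S -> v1 \in S -> v2 \in S -> v2 != v1 ->
  exists2 T, edet_set adj T & #|T| <= #|S|.
Proof.
move=> detS Sv1 Sv2 v21.
pose G1 := (graph_aut_group adj :&: 'C(S :\ v1 | 'P))%G.
have [u1 v1u1 u1_out] : exists2 u1, adj v1 u1 & u1 \notin orbit 'P G1 v1.
  apply: exists_nbr_notin_orbit => //; first exact: subsetIl.
  apply: (@orbit_neqT_of_astabs _ _ [set v2] v2); rewrite ?set11 //.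
    apply: subset_trans (subsetIr _ _) (subset_trans _ (astab_sub _ _)).
    by apply: astabS; rewrite sub1set !inE v21.
  by apply/eqP => /setP/(_ v1); rewrite !inE eq_sym (negbTE v21).
pose G2 := (graph_aut_group adj :&: 'N([set v1; u1] | 'P))%G.
have G2_orbit_neqT v : orbit 'P G2 v != setT.
  apply: (@orbit_neqT_of_astabs _ _ [set v1; u1] v1); rewrite ?subsetIr ?set21 //.
  apply: contraTneq card_V => pairT.
  by rewrite -cardsT -pairT cards2; case: (_ != _).
have /fin_all_exists[f f_nbr] : forall v, exists u, adj v u && (u \notin orbit 'P G2 v).
  move=> v; have [u vu u_out] :=
    exists_nbr_notin_orbit adj_sym connected (subsetIl _ _) (G2_orbit_neqT v).
  by exists u; rewrite vu.
exists ([set v1; u1] |: [set [set v; f v] | v in S :\ v1]).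
  apply: (edet_set_of_vdet_set detS).
    apply/subsetP => e /setU1P[-> | /imsetP[v _ ->]].
      exact: edge_set_pair v1u1.
    by have /andP[vfv _] := f_nbr v; apply: edge_set_pair vfv.
  move=> s aut_s fixT.
  have G2s : s \in G2 by rewrite inE aut_s; apply/fixT/setU11.
  have fix_rest : {in S :\ v1, forall x, s x = x}.
    move=> x Sx; have /andP[_ fx_out] := f_nbr x.
    by apply: (perm_fixed_of_pair G2s _ fx_out); apply/fixT/setU1r/imset_f.
  have G1s : s \in G1 by rewrite inE aut_s; apply/astabP.
  have sv1 : s v1 = v1 by apply: (perm_fixed_of_pair G1s _ u1_out); apply/fixT/setU11.
  by move=> x Sx; have [-> // | xv1] := eqVneq x v1; rewrite fix_rest // !inE xv1.
by rewrite cardsU1 (cardsD1 v1 S) Sv1 leq_add ?leq_b1 ?leq_imset_card.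
Qed.

End DeterminingSets.

Theorem theorem4 (V : finType) (adj : rel V)
  (adj_sym : symmetric adj) (adj_irr : irreflexive adj)
  (connected : forall u v : V, connect adj u v)
  (card_V : 3 <= #|V|)
  (det_ne1 : det_number adj <> 1) :
  det_index adj <= det_number adj.
Proof.
have [S detS eS] := det_number_attained adj; rewrite -eS in det_ne1 *.
have [S0 | [v1 Sv1]] := set_0Vmem S.
  have edet0 : edet_set adj set0.
    by apply: (edet_set_of_vdet_set detS (sub0set _)) => s _ _ x; rewrite S0 inE.
  by apply: leq_trans (det_index_le edet0) _; rewrite cards0.
have [v2 Sv2 v21] : exists2 v2, v2 \in S & v2 != v1.
  have : 0 < #|S :\ v1| by move: det_ne1; rewrite (cardsD1 v1 S) Sv1; case: #|_|.
  by case/card_gt0P => v2; rewrite !inE => /andP[v21 Sv2]; exists v2.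
have [T edetT leTS] :=
  exists_edet_set_le_vdet_set adj_sym connected card_V detS Sv1 Sv2 v21.
exact: leq_trans (det_index_le edetT) leTS.
Qed.
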